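(* Let $P$ be a probability distribution on $\mathcal{X}\times\{+1,-1\}$ such that for some $\varepsilon>0$, $P(\{x\in\mathcal{X}:\varepsilon\le P(+1|x)\le 1-\varepsilon\})>0$. Let $\ell:\mathbb{R}\to\mathbb{R}$ be non-decreasing, convex and non-negative, and suppose that for every $M>0$ there is $z_0$ such that $g\ge M$ for all $z\ge z_0$ and all $g\in\partial\ell(z)$. Define, for measurable $f:\mathcal{X}\to\mathbb{R}$ and $\rho\in\mathbb{R}$, $\mathcal{R}(f,\rho)=-2\rho+\mathbb{E}_P[\ell(\rho-yf(x))]$ and $\mathcal{R}^*=\inf\{\mathcal{R}(f,\rho): f\in L_0(\mathcal{X}),\rho\in\mathbb{R}\}$. Then $\mathcal{R}^*>-\infty$.
   Context: $P(y|x)$ denotes the conditional probability of label $y$ given input $x$; $L_0(\mathcal{X})$ is the set of measurable functions on $\mathcal{X}$; $\partial\ell(z)$ is the subdifferential of $\ell$ at $z$. *)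

From HB Require Import structures.
From mathcomp Require Import all_boot all_order all_algebra.
From mathcomp Require Import all_classical all_reals all_analysis.
Set Implicit Arguments. Unset Strict Implicit. Unset Printing Implicit Defensive.
Import Order.TTheory GRing.Theory Num.Theory.
Local Open Scope classical_set_scope.
Local Open Scope ring_scope.

Definition lab {R : realType} (b : bool) : R := if b then 1 else -1.

(* eta is a version of the conditional probability P(+1|x):
   for every measurable A, P(A x {+1}) = int_{A x {+1,-1}} eta(x) dP *)
Definition cond_prob_pos {d} {X : measurableType d} {R : realType}
  (P : probability (X * bool)%type R) (eta : X -> R) : Prop :=
  measurable_fun setT eta /\
  forall A : set X, measurable A ->
    P (A `*` [set true]) = (\int[P]_(z in A `*` setT) (eta z.1)%:E)%E.

Definition subdiff {R : realType} (l : R -> R) (z : R) : set R :=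
  [set g | forall w, l z + g * (w - z) <= l w].

Definition convex_fun {R : realType} (l : R -> R) : Prop :=
  forall x y t : R, 0 <= t <= 1 ->
    l (t * x + (1 - t) * y) <= t * l x + (1 - t) * l y.

Definition risk {d} {X : measurableType d} {R : realType}
  (P : probability (X * bool)%type R) (l : R -> R) (f : X -> R) (rho : R)
  : \bar R :=
  ((- (2 * rho))%:E + \int[P]_z (l (rho - lab z.2 * f z.1))%:E)%E.

Definition opt_risk {d} {X : measurableType d} {R : realType}
  (P : probability (X * bool)%type R) (l : R -> R) : \bar R :=
  ereal_inf [set r | exists (f : X -> R) (rho : R),
                      measurable_fun setT f /\ r = risk P l f rho].

From HB Require Import structures.
From mathcomp Require Import all_boot all_order all_algebra.
From mathcomp Require Import all_classical all_reals all_analysis.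
From mathcomp Require Import measurable_realfun.
From mathcomp Require Import ring lra.
Set Implicit Arguments. Unset Strict Implicit. Unset Printing Implicit Defensive.
Import Order.TTheory GRing.Theory Num.Theory.
Local Open Scope classical_set_scope.
Local Open Scope ring_scope.

(* Let A be the set where eps <= eta <= 1 - eps. For any f and rho, each x in A
   has a label y with y f(x) <= 0, and each label carries at least an
   eps-fraction of the mass of A, so monotonicity of l gives
   E[l(rho - y f(x))] >= eps P(A) l(rho). Convexity together with unbounded
   subgradients makes l grow faster than any linear function, hence
   -2 rho + eps P(A) l(rho) is bounded below uniformly in rho. *)

Section convex_subgradient.
Variables (R : realType) (l : R -> R).
Hypothesis lconv : convex_fun l.

Lemma convex_fun_chord w z u : w < z -> z < u ->
  l z * (u - w) <= (u - z) * l w + (z - w) * l u.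
Proof.
move=> wz zu; have uw : 0 < u - w by lra.
pose t := (u - z) / (u - w).
have t01 : 0 <= t <= 1.
  by apply/andP; split; [apply: divr_ge0; lra | rewrite ler_pdivrMr //; lra].
have := lconv w u t01.
have -> : t * w + (1 - t) * u = z by rewrite /t; field; rewrite gt_eqF.
rewrite -(ler_pM2r uw).
have -> // : (t * l w + (1 - t) * l u) * (u - w) = (u - z) * l w + (z - w) * l u.
by rewrite /t; field; rewrite gt_eqF.
Qed.

Lemma convex_fun_slope_le w z u : w < z -> z < u ->
  (l z - l w) / (z - w) <= (l u - l z) / (u - z).
Proof.
move=> wz zu; have := convex_fun_chord wz zu.
rewrite ler_pdivrMr ?subr_gt0 // mulrAC ler_pdivlMr ?subr_gt0 //; nra.
Qed.

(* The supremum of the left difference quotients at [z] is a subgradient. *)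
Lemma convex_subdiff_nonempty z : exists g, subdiff l z g.
Proof.
pose S := [set (l z - l w) / (z - w) | w in [set w | w < z]].
have hS : has_sup S.
  split; first by exists ((l z - l (z - 1)) / (z - (z - 1))), (z - 1) => //=; lra.
  exists ((l (z + 1) - l z) / (z + 1 - z)) => _ [w /= wz <-].
  by apply: convex_fun_slope_le; lra.
exists (sup S) => w; have [wz|zw|->] := ltgtP w z.
- have : (l z - l w) / (z - w) <= sup S by apply: sup_upper_bound => //; exists w.
  by rewrite ler_pdivrMr ?subr_gt0 //; nra.
- have : sup S <= (l w - l z) / (w - z).
    apply: ge_sup; first by case: hS.
    by move=> _ [v /= vz <-]; exact: convex_fun_slope_le.
  by rewrite ler_pdivlMr ?subr_gt0 //; nra.
- by rewrite subrr mulr0 addr0.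
Qed.

End convex_subgradient.

Section convex_growth.
Variables (R : realType) (l : R -> R).
Hypotheses (lconv : convex_fun l) (l_ge0 : forall z, 0 <= l z).
Hypothesis lgrow : forall M : R, 0 < M -> exists z0 : R,
  forall z, z0 <= z -> forall g, subdiff l z g -> M <= g.

Lemma convex_fun_linear_growth M : 0 < M ->
  exists z0, forall z, z0 <= z -> M * (z - z0) <= l z.
Proof.
move=> M0; have [z0 Hz0] := lgrow M0.
have [g hg] := convex_subdiff_nonempty lconv z0.
exists z0 => z z0z; have := hg z; have := Hz0 z0 (lexx _) g hg.
by have := l_ge0 z0; nra.
Qed.

Lemma scale_sub_linear_bounded_below k a : 0 < k -> 0 <= a ->
  exists m, forall z, m <= k * l z - a * z.
Proof.
move=> k0 a0; have [|z0 Hz0] := @convex_fun_linear_growth ((a + 1) / k).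
  by apply: divr_gt0; lra.
exists (- (a * z0)) => z; have [z0z|zz0] := lerP z0 z; last by have := l_ge0 z; nra.
have := Hz0 z z0z; rewrite -(ler_pM2l k0) mulrA.
have -> : k * ((a + 1) / k) = a + 1 by field; rewrite gt_eqF.
nra.
Qed.

End convex_growth.

Section conditional_label_mass.
Variables (d : measure_display) (X : measurableType d) (R : realType).
Variables (P : probability (X * bool)%type R) (eta : X -> R).
Hypothesis Heta : cond_prob_pos P eta.
Local Open Scope ereal_scope.

Lemma measure_setX_bool (B : set X) : measurable B ->
  P (B `*` setT) = P (B `*` [set true]) + P (B `*` [set false]).
Proof.
move=> mB; rewrite -measureU; try exact: measurableX.
  congr (P _); apply/seteqP; split=> [[x []] [Bx _]|[x b] [] [Bx _]] //.
  - by left.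
  - by right.
by apply/seteqP; split=> [[x b] [[_ /= ->] [_ /=]]|].
Qed.

Lemma cond_prob_pos_label_ge (eps : R) (B : set X) (b : bool) :
  measurable B -> (0 <= eps)%R -> (forall x, B x -> eps <= eta x <= 1 - eps)%R ->
  eps%:E * P (B `*` setT) <= P (B `*` [set b]).
Proof.
move=> mB eps0 etaB; have mBT : measurable (B `*` [set: bool]) by exact: measurableX.
have meta : measurable_fun (B `*` [set: bool]) (EFin \o (eta \o fst)).
  apply/measurable_EFinP/(measurable_funS measurableT (@subsetT _ _)).
  by apply: measurableT_comp => //; exact: Heta.1.
have eta_ge0 z : (B `*` [set: bool]) z -> 0 <= (eta z.1)%:E.
  by case: z => x _ [/= Bx _]; have := etaB x Bx; rewrite lee_fin; lra.
have true_ge : eps%:E * P (B `*` setT) <= P (B `*` [set true]).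
  rewrite Heta.2 // -integral_cst //; apply: ge0_le_integral => //.
  by move=> [x _] [/= Bx _]; have /andP[] := etaB x Bx.
have true_le : P (B `*` [set true]) <= (1 - eps)%:E * P (B `*` setT).
  rewrite Heta.2 // -integral_cst //; apply: ge0_le_integral => //.
  by move=> [x _] [/= Bx _]; have /andP[] := etaB x Bx.
case: b => //; move: true_le; rewrite measure_setX_bool //.
have PE b : P (B `*` [set b]) = (fine (P (B `*` [set b])))%:E.
  by rewrite fineK // fin_num_measure //; exact: measurableX.
by rewrite (PE true) (PE false) -!EFinD -!EFinM !lee_fin; lra.
Qed.

Lemma loss_integral_ge (l : R -> R) (f : X -> R) (rho eps : R) (B : set X) :
  {homo l : x y / (x <= y)%R} -> (forall z, (0 <= l z)%R) ->
  measurable_fun setT f -> measurable B -> (0 <= eps)%R ->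
  (forall x, B x -> eps <= eta x <= 1 - eps)%R ->
  eps%:E * P (B `*` setT) * (l rho)%:E <= \int[P]_z (l (rho - lab z.2 * f z.1))%:E.
Proof.
move=> lmono l_ge0 mf mB eps0 etaB.
pose Bneg := B `&` f @^-1` `]-oo, 0%R]; pose Bpos := B `&` f @^-1` `]0%R, +oo[.
have mBneg : measurable Bneg.
  by apply: measurableI => //; rewrite -[_ @^-1` _]setTI; exact: mf.
have mBpos : measurable Bpos.
  by apply: measurableI => //; rewrite -[_ @^-1` _]setTI; exact: mf.
pose S := Bneg `*` [set true] `|` Bpos `*` [set false].
have mS : measurable S by apply: measurableU; exact: measurableX.
have loss_ge z : S z -> (l rho <= l (rho - lab z.2 * f z.1))%R.
  case: z => x b [[[_ /=]]|[[_ /=]]]; rewrite in_itv /= ?andbT => fx ->;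
    by apply: lmono; rewrite /lab; lra.
have mloss : measurable_fun setT (fun z : X * bool => (l (rho - lab z.2 * f z.1))%:E).
  apply/measurable_EFinP/measurableT_comp; first exact: nondecreasing_measurable.
  apply: measurable_funB => //; apply: measurable_funM; last exact: measurableT_comp.
  by apply: measurable_fun_ifT => //; exact: measurable_snd.
have mass : eps%:E * P (B `*` setT) <= P S.
  have -> : B `*` [set: bool] = Bneg `*` [set: bool] `|` Bpos `*` [set: bool].
    apply/seteqP; split=> [[x b] [/= Bx _]|[x b] [] [[]]] //.
    have [fx|fx] := lerP (f x) 0; [left|right];
      by split=> //; split=> //=; rewrite in_itv /= ?andbT.
  rewrite /S !measureU; try exact: measurableX.
  2,3: apply/seteqP; split=> [[x b] [[[_ /= fx] _] [[_ /= fx'] _]]|] //.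
  2,3: by move: fx fx'; rewrite !in_itv /= andbT; lra.
  rewrite ge0_muleDr ?measure_ge0 //; apply: leeD;
    by apply: cond_prob_pos_label_ge => // x [/etaB].
apply: (le_trans (y := (l rho)%:E * P S)).
  by rewrite muleC lee_wpmul2l // lee_fin.
rewrite -integral_cst //.
apply: (le_trans (y := \int[P]_(z in S) (l (rho - lab z.2 * f z.1))%:E)).
  apply: ge0_le_integral => //; last exact: measurable_funS mloss.
  by move=> z _; rewrite lee_fin.
by apply: ge0_subset_integral => // z _; rewrite lee_fin.
Qed.

End conditional_label_mass.

Theorem lemma2 (d : measure_display) (X : measurableType d) (R : realType)
  (P : probability (X * bool)%type R) (eta : X -> R)
  (Heta : cond_prob_pos P eta)
  (Hmargin : exists eps : R, 0 < eps /\
     (0 < P ([set x | (eps <= eta x <= 1 - eps)%R] `*` [set: bool]))%E)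
  (l : R -> R)
  (Hmono : {homo l : x y / x <= y})
  (Hconv : convex_fun l)
  (Hnneg : forall z, 0 <= l z)
  (Hgrow : forall M : R, 0 < M -> exists z0 : R,
     forall z, z0 <= z -> forall g, subdiff l z g -> M <= g) :
  (-oo < opt_risk P l)%E.
Proof.
have [eps [eps0]] := Hmargin; set A := [set x | _] => PA_gt0.
have mA : measurable A.
  have -> : A = eta @^-1` `[eps, 1 - eps] by apply/seteqP; split=> x; rewrite /= in_itv.
  by rewrite -[_ @^-1` _]setTI; apply: Heta.1.
have PAE : P (A `*` setT) = (fine (P (A `*` setT)))%:E.
  by rewrite fineK // fin_num_measure //; exact: measurableX.
have c_gt0 : 0 < eps * fine (P (A `*` setT)).
  by rewrite mulr_gt0 // -lte_fin -PAE.
have [m Hm] := scale_sub_linear_bounded_below Hconv Hnneg Hgrow c_gt0 (ler0n R 2).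
apply: (lt_le_trans (ltNyr m)); apply: le_ereal_inf_tmp => _ [f [rho [mf ->]]].
have := loss_integral_ge Heta rho Hmono Hnneg mf mA (ltW eps0) (fun x Ax => Ax).
rewrite PAE -!EFinM => loss_ge; apply: le_trans (leeD2l _ loss_ge).
by rewrite -EFinD lee_fin addrC; exact: Hm.
Qed.
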